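(* For any representations $R_1,R_2,R_3$: (1) $d_{\mathrm{repr}}(R_1,R_1)=0$; (2) $d_{\mathrm{repr}}(R_1,R_2)=d_{\mathrm{repr}}(R_2,R_1)$; (3) $d_{\mathrm{repr}}(R_1,R_3)\le d_{\mathrm{repr}}(R_1,R_2)+d_{\mathrm{repr}}(R_2,R_3)$.
   Context: A representation is a chain-structured causal model $U\to v_1\to\cdots\to v_L$ whose hidden variables are real-vector-valued functions of the input (on a task $S$). For representations $R_i$, let $H_i$ be the concatenation (direct sum) of the solutions of all hidden variables of $R_i$, regarded as a function on $S$. Then $d_{\mathrm{repr}}(R_1,R_2)=\max\big(\inf_{\|A\|_{\mathrm{op}}\le1}\|AH_1-H_2\|,\ \inf_{\|B\|_{\mathrm{op}}\le1}\|H_1-BH_2\|\big)$, where the infima are over linear operators of operator norm at most $1$ and $\|\cdot\|$ is a direct-sum norm. *)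

From HB Require Import structures.
From mathcomp Require Import all_boot all_order all_algebra.
From mathcomp Require Import classical_sets reals.
Set Implicit Arguments. Unset Strict Implicit. Unset Printing Implicit Defensive.
Import Order.TTheory GRing.Theory Num.Theory.
Local Open Scope ring_scope.
Local Open Scope classical_set_scope.

(* A representation on a (finite) task S: a chain-structured causal model
   U -> v_1 -> ... -> v_L.  Layer i (0-based) has dimension [dim i];
   the mechanism of v_1 maps the input to R^{dim 0}, and the mechanism of
   v_{i+2} maps R^{dim i} to R^{dim (i+1)}. *)
Record representation (R : realType) (S : finType) := Representation {
  depth : nat;
  dim : nat -> nat;
  mech0 : S -> 'rV[R]_(dim 0);
  mech : forall i : nat, 'rV[R]_(dim i) -> 'rV[R]_(dim i.+1)
}.

Fixpoint solution (R : realType) (S : finType) (Rp : representation R S)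
    (i : nat) : S -> 'rV[R]_(dim Rp i) :=
  match i with
  | 0 => @mech0 R S Rp
  | i'.+1 => fun x => @mech R S Rp i' (solution Rp i' x)
  end.

Definition tdim (R : realType) (S : finType) (Rp : representation R S) : nat :=
  (\sum_(i < depth Rp) dim Rp i)%N.

Definition Hcat (R : realType) (S : finType) (Rp : representation R S)
  (x : S) : 'rV[R]_(tdim Rp) :=
  \mxrow_(i < depth Rp) solution Rp i x.

Definition vnorm (R : realType) (n : nat) (v : 'rV[R]_n) : R :=
  Num.sqrt (\sum_(j < n) v ord0 j ^+ 2).

(* Operator norm at most 1 (w.r.t. Euclidean norms); A acts on row vectors
   by right multiplication. *)
Definition opnorm_le1 (R : realType) (m n : nat) (A : 'M[R]_(m, n)) : Prop :=
  forall v : 'rV[R]_m, vnorm (v *m A) <= vnorm v.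

Definition fnorm (R : realType) (S : finType) (n : nat) (H : S -> 'rV[R]_n) : R :=
  Num.sqrt (\sum_(x : S) \sum_(j < n) H x ord0 j ^+ 2).

Definition dfit (R : realType) (S : finType) (m n : nat)
  (H1 : S -> 'rV[R]_m) (H2 : S -> 'rV[R]_n) : R :=
  inf [set fnorm (fun x => H1 x *m A - H2 x) | A in [set A : 'M[R]_(m, n) | opnorm_le1 A]].

Definition dfit' (R : realType) (S : finType) (m n : nat)
  (H1 : S -> 'rV[R]_m) (H2 : S -> 'rV[R]_n) : R :=
  inf [set fnorm (fun x => H1 x - H2 x *m B) | B in [set B : 'M[R]_(n, m) | opnorm_le1 B]].

Definition d_repr (R : realType) (S : finType) (R1 R2 : representation R S) : R :=
  Num.max (dfit (Hcat R1) (Hcat R2)) (dfit' (Hcat R1) (Hcat R2)).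

(* d_repr is the symmetrization max (dfit H1 H2) (dfit H2 H1) of the one-sided
   fitting error dfit H1 H2 = inf_{|A| <= 1} |H1 A - H2|, since dfit' H1 H2 =
   dfit H2 H1.  Taking A = 1 gives dfit H H = 0.  For the triangle inequality,
   contractions compose and H1 A B - H3 = (H1 A - H2) B + (H2 B - H3); as B is
   a contraction, |H1 A B - H3| <= |H1 A - H2| + |H2 B - H3|, and taking the
   infimum over A and B gives dfit H1 H3 <= dfit H1 H2 + dfit H2 H3.  The only
   analytic input is Minkowski's inequality for the l2 norm, derived from
   Lagrange's identity. *)

From mathcomp Require Import all_boot all_order all_algebra.
From mathcomp Require Import boolp classical_sets reals.
From mathcomp Require Import ring.
Set Implicit Arguments.
Unset Strict Implicit.
Unset Printing Implicit Defensive.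
Import Order.TTheory GRing.Theory Num.Theory.
Local Open Scope ring_scope.

Section L2Norm.
Variables (R : realType) (I : finType).
Implicit Types a b : I -> R.

Definition l2norm a : R := Num.sqrt (\sum_i a i ^+ 2).

Lemma sumr_sqr_ge0 a : 0 <= \sum_i a i ^+ 2.
Proof. by apply: sumr_ge0 => i _; exact: sqr_ge0. Qed.

Lemma lagrange_identity a b :
  \sum_i \sum_j (a i * b j - a j * b i) ^+ 2 =
  2 * ((\sum_i a i ^+ 2) * (\sum_i b i ^+ 2) - (\sum_i a i * b i) ^+ 2).
Proof.
have sum_mul (f g : I -> R) :
    (\sum_i f i) * (\sum_j g j) = \sum_i \sum_j f i * g j.
  by rewrite mulr_suml; under eq_bigr do rewrite mulr_sumr.
set SA := \sum_i a i ^+ 2; set SB := \sum_i b i ^+ 2; set SAB := \sum_i a i * b i.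
have -> : 2 * (SA * SB - SAB ^+ 2) = SA * SB + SB * SA - 2 * (SAB * SAB) by ring.
rewrite !sum_mul -big_split mulr_sumr -sumrB; apply: eq_bigr => i _.
rewrite -big_split mulr_sumr -sumrB; apply: eq_bigr => j _ /=.
ring.
Qed.

Lemma cauchy_schwarz a b :
  (\sum_i a i * b i) ^+ 2 <= (\sum_i a i ^+ 2) * (\sum_i b i ^+ 2).
Proof.
have : 0 <= \sum_i \sum_j (a i * b j - a j * b i) ^+ 2.
  by apply: sumr_ge0 => i _; exact: sumr_sqr_ge0.
by rewrite lagrange_identity pmulr_rge0 // subr_ge0.
Qed.

Lemma l2normD a b : l2norm (a \+ b) <= l2norm a + l2norm b.
Proof.
rewrite /l2norm -[X in _ <= X]ger0_norm ?addr_ge0 ?sqrtr_ge0 // -sqrtr_sqr.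
rewrite ler_sqrt ?sqr_ge0 // sqrrD !sqr_sqrtr ?sumr_sqr_ge0 // -sqrtrM ?sumr_sqr_ge0 //.
have -> : \sum_i (a \+ b) i ^+ 2 =
    \sum_i a i ^+ 2 + \sum_i b i ^+ 2 + 2 * \sum_i a i * b i.
  by rewrite mulr_sumr -!big_split; apply: eq_bigr => i _ /=; ring.
rewrite [leRHS]addrAC lerD2l -[leRHS]mulr_natl ler_pM2l //.
rewrite (le_trans (ler_norm _)) // -sqrtr_sqr ler_sqrt ?mulr_ge0 ?sumr_sqr_ge0 //.
exact: cauchy_schwarz.
Qed.

End L2Norm.

Section FitDistance.
Variables (R : realType) (S : finType).

Lemma fnorm_l2norm n (F : S -> 'rV[R]_n) :
  fnorm F = l2norm (fun p : S * 'I_n => F p.1 ord0 p.2).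
Proof. by rewrite /fnorm pair_bigA. Qed.

Lemma fnorm_vnorm n (F : S -> 'rV[R]_n) :
  fnorm F = Num.sqrt (\sum_x vnorm (F x) ^+ 2).
Proof.
rewrite /fnorm; congr Num.sqrt; apply: eq_bigr => x _.
by rewrite sqr_sqrtr ?sumr_sqr_ge0.
Qed.

Lemma fnorm0 n : fnorm (fun _ : S => 0 : 'rV[R]_n) = 0.
Proof.
by rewrite /fnorm big1 ?sqrtr0 // => x _; rewrite big1 // => j _; rewrite mxE expr0n.
Qed.

Lemma fnormD n (F G : S -> 'rV[R]_n) :
  fnorm (fun x => F x + G x) <= fnorm F + fnorm G.
Proof.
rewrite !fnorm_l2norm /l2norm; under eq_bigr do rewrite mxE.
exact: l2normD.
Qed.

Lemma fnorm_distrC n (F G : S -> 'rV[R]_n) :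
  fnorm (fun x => F x - G x) = fnorm (fun x => G x - F x).
Proof.
rewrite /fnorm; congr Num.sqrt; apply: eq_bigr => x _; apply: eq_bigr => j _.
by rewrite !mxE -sqrrN opprB.
Qed.

Lemma opnorm_le1_mx0 m n : opnorm_le1 (0 : 'M[R]_(m, n)).
Proof.
move=> v; rewrite mulmx0 /vnorm big1 ?sqrtr0 ?sqrtr_ge0 // => j _.
by rewrite mxE expr0n.
Qed.

Lemma opnorm_le1_mx1 n : opnorm_le1 (1%:M : 'M[R]_n).
Proof. by move=> v; rewrite mulmx1. Qed.

Lemma opnorm_le1_mulmx m n p (A : 'M[R]_(m, n)) (B : 'M[R]_(n, p)) :
  opnorm_le1 A -> opnorm_le1 B -> opnorm_le1 (A *m B).
Proof. by move=> hA hB v; rewrite mulmxA; apply: le_trans (hB _) (hA _). Qed.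

Lemma fnorm_mulmx_le m n (F : S -> 'rV[R]_m) (B : 'M[R]_(m, n)) :
  opnorm_le1 B -> fnorm (fun x => F x *m B) <= fnorm F.
Proof.
move=> hB; rewrite !fnorm_vnorm ler_sqrt ?sumr_sqr_ge0 //.
by apply: ler_sum => x _; rewrite ler_sqr ?nnegrE ?sqrtr_ge0 //; exact: hB.
Qed.

Definition fit_errors m n (H1 : S -> 'rV[R]_m) (H2 : S -> 'rV[R]_n) : set R :=
  [set fnorm (fun x => H1 x *m A - H2 x) | A in [set A | opnorm_le1 A]].

Section Fit.
Variables (m n : nat) (H1 : S -> 'rV[R]_m) (H2 : S -> 'rV[R]_n).

Lemma has_inf_fit_errors : has_inf (fit_errors H1 H2).
Proof.
split; last by exists 0 => _ [A _ <-]; exact: sqrtr_ge0.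
by exists (fnorm (fun x => H1 x *m 0 - H2 x)), 0; first exact: opnorm_le1_mx0.
Qed.

Lemma dfit_ge0 : 0 <= dfit H1 H2.
Proof.
apply: lb_le_inf; first by case: has_inf_fit_errors.
by move=> _ [A _ <-]; exact: sqrtr_ge0.
Qed.

Lemma dfit_le A : opnorm_le1 A -> dfit H1 H2 <= fnorm (fun x => H1 x *m A - H2 x).
Proof. by move=> hA; apply: ge_inf; [case: has_inf_fit_errors | exists A]. Qed.

Lemma dfit'E : dfit' H1 H2 = dfit H2 H1.
Proof. by congr inf; apply: eq_imagel => B _; exact: fnorm_distrC. Qed.

End Fit.

Lemma dfitxx n (H : S -> 'rV[R]_n) : dfit H H = 0.
Proof.
apply/le_anti; rewrite dfit_ge0 andbT -(fnorm0 n).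
have -> : (fun _ => 0) = (fun x => H x *m 1%:M - H x).
  by apply: funext => x; rewrite mulmx1 subrr.
exact/dfit_le/opnorm_le1_mx1.
Qed.

Lemma dfit_triangle m n p (H1 : S -> 'rV[R]_m) (H2 : S -> 'rV[R]_n) (H3 : S -> 'rV[R]_p) :
  dfit H1 H3 <= dfit H1 H2 + dfit H2 H3.
Proof.
rewrite /dfit -inf_sumE; [apply: lb_le_inf | exact: has_inf_fit_errors..].
  have [[e12 E12] _] := has_inf_fit_errors H1 H2.
  have [[e23 E23] _] := has_inf_fit_errors H2 H3.
  by exists (e12 + e23), e12 => //; exists e23.
move=> _ [_ [A hA <-] [_ [B hB <-] <-]].
apply: le_trans (dfit_le H1 H3 (opnorm_le1_mulmx hA hB)) _.
have -> : (fun x => H1 x *m (A *m B) - H3 x) =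
          (fun x => (H1 x *m A - H2 x) *m B + (H2 x *m B - H3 x)).
  by apply: funext => x; rewrite mulmxBl mulmxA addrA subrK.
by apply: le_trans (fnormD _ _) _; rewrite lerD2r fnorm_mulmx_le.
Qed.

End FitDistance.

Lemma d_reprE (R : realType) (S : finType) (R1 R2 : representation R S) :
  d_repr R1 R2 = Num.max (dfit (Hcat R1) (Hcat R2)) (dfit (Hcat R2) (Hcat R1)).
Proof. by rewrite /d_repr dfit'E. Qed.

Theorem lemmaG2 (R : realType) (S : finType) (R1 R2 R3 : representation R S) :
  [/\ d_repr R1 R1 = 0,
      d_repr R1 R2 = d_repr R2 R1 &
      d_repr R1 R3 <= d_repr R1 R2 + d_repr R2 R3].
Proof.
rewrite !d_reprE; split; first by rewrite dfitxx maxxx.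
  by rewrite maxC.
rewrite ge_max; apply/andP; split.
  apply: le_trans (dfit_triangle _ (Hcat R2) _) (lerD _ _);
    by rewrite le_max lexx ?orbT.
rewrite addrC; apply: le_trans (dfit_triangle _ (Hcat R2) _) (lerD _ _);
  by rewrite le_max lexx ?orbT.
Qed.
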